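(* Let $G$ be the $m\times n$ grid with $m,n\ge 2$. For all $1\le z<z'<z''\le n$, the set $\{(1,z),(m,z'),(1,z'')\}$ is a landmark set of $G$.
   Context: The $m\times n$ grid $G$ has vertex set $V=\{(i,j):1\le i\le m,\ 1\le j\le n\}$, with $(i_1,j_1),(i_2,j_2)$ adjacent iff $|i_1-i_2|+|j_1-j_2|=1$; thus $d((i_1,j_1),(i_2,j_2))=|i_1-i_2|+|j_1-j_2|$. A vertex $x$ separates $u,v$ if $d(x,u)\neq d(x,v)$. A landmark set is $L\subseteq V$ such that every pair of distinct vertices is separated by some vertex of $L$. *)

From Stdlib Require Import Arith List.
Import ListNotations.

Definition absdiff (a b : nat) : nat := (a - b) + (b - a).

Definition in_grid (m n : nat) (v : nat * nat) : Prop :=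
  1 <= fst v <= m /\ 1 <= snd v <= n.

(* graph distance in the grid (Manhattan distance) *)
Definition grid_dist (u v : nat * nat) : nat :=
  absdiff (fst u) (fst v) + absdiff (snd u) (snd v).

Definition separates (x u v : nat * nat) : Prop :=
  grid_dist x u <> grid_dist x v.

Definition landmark_set (m n : nat) (L : list (nat * nat)) : Prop :=
  (forall x, In x L -> in_grid m n x) /\
  forall u v, in_grid m n u -> in_grid m n v -> u <> v ->
    exists x, In x L /\ separates x u v.

(** The landmarks (1,z) and (m,z') lie on opposite boundary rows, so the sum of
    the distances from them to (a,b) does not depend on the row a: it is
    m - 1 + |z - b| + |z' - b|.  Comparing the landmarks (1,z) and (1,z'') of the
    first row cancels the row as well, leaving |z - b| - |z'' - b|, which is
    strictly increasing for b between z and z'' and constant outside.  Hence two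
    vertices with the same distance vector either share their column, or have
    their columns both left of z or both right of z''; there |z - b| + |z' - b|
    is strictly monotone in b, so the columns agree anyway, and then the
    distance to (1,z) pins down the row. *)

From Stdlib Require Import Arith List Lia.
Import ListNotations.

Lemma absdiff_le x y : x <= y -> absdiff x y = y - x.
Proof. unfold absdiff; lia. Qed.

Lemma absdiff_ge x y : y <= x -> absdiff x y = x - y.
Proof. unfold absdiff; lia. Qed.

Lemma exists_separates (L : list (nat * nat)) u v :
  ~ (forall x, In x L -> grid_dist x u = grid_dist x v) ->
  exists x, In x L /\ separates x u v.
Proof.
  induction L as [|y L IHL]; intros Hdist.
  - exfalso; apply Hdist; intros x [].
  - destruct (Nat.eq_dec (grid_dist y u) (grid_dist y v)) as [Ey|Ny].
    + destruct IHL as [x [Hx Hsep]].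
      * intros HL; apply Hdist; intros x [<-|Hx]; auto.
      * exists x; split; [right|]; assumption.
    + exists y; split; [left; reflexivity | exact Ny].
Qed.

Lemma landmark_set_of_resolving m n (L : list (nat * nat)) :
  (forall x, In x L -> in_grid m n x) ->
  (forall u v, in_grid m n u -> in_grid m n v ->
     (forall x, In x L -> grid_dist x u = grid_dist x v) -> u = v) ->
  landmark_set m n L.
Proof.
  intros HL Hres; split; [exact HL|].
  intros u v Hu Hv Huv; apply exists_separates.
  intros Hdist; exact (Huv (Hres u v Hu Hv Hdist)).
Qed.

Lemma absdiff_diff_eq_cases z z'' b d : z < z'' ->
  absdiff z b + absdiff z'' d = absdiff z d + absdiff z'' b ->
  b = d \/ (b <= z /\ d <= z) \/ (z'' <= b /\ z'' <= d).
Proof. unfold absdiff; lia. Qed.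

Lemma absdiff_sum_inj z z' b d :
  (b <= z /\ d <= z /\ b <= z' /\ d <= z') \/
  (z <= b /\ z <= d /\ z' <= b /\ z' <= d) ->
  absdiff z b + absdiff z' b = absdiff z d + absdiff z' d -> b = d.
Proof. unfold absdiff; lia. Qed.

Lemma column_eq_of_dist_eqs z z' z'' b d : z < z' -> z' < z'' ->
  absdiff z b + absdiff z'' d = absdiff z d + absdiff z'' b ->
  absdiff z b + absdiff z' b = absdiff z d + absdiff z' d -> b = d.
Proof.
  intros Hzz' Hz'z'' Hdiff Hsum.
  destruct (absdiff_diff_eq_cases z z'' b d) as [Hbd|Hside]; [lia|assumption|assumption|].
  apply (absdiff_sum_inj z z'); [lia|assumption].
Qed.

Theorem mainTheorem13 (m n z z' z'' : nat) :
  2 <= m -> 2 <= n ->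
  1 <= z -> z < z' -> z' < z'' -> z'' <= n ->
  landmark_set m n [(1, z); (m, z'); (1, z'')].
Proof.
  intros Hm Hn Hz Hzz' Hz'z'' Hz''.
  apply landmark_set_of_resolving.
  - intros x [<-|[<-|[<-|[]]]]; unfold in_grid; simpl; lia.
  - intros [a b] [c d] [Ha Hb] [Hc Hd] Hdist; simpl in *.
    pose proof (Hdist _ (or_introl eq_refl)) as E1.
    pose proof (Hdist _ (or_intror (or_introl eq_refl))) as E2.
    pose proof (Hdist _ (or_intror (or_intror (or_introl eq_refl)))) as E3.
    unfold grid_dist in E1, E2, E3; simpl in E1, E2, E3.
    rewrite (absdiff_le 1 a), (absdiff_le 1 c) in E1, E3 by lia.
    rewrite (absdiff_ge m a), (absdiff_ge m c) in E2 by lia.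
    assert (Hbd : b = d).
    { apply (column_eq_of_dist_eqs z z' z''); lia. }
    subst d; f_equal; lia.
Qed.
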